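(* Let $W$ be a weighing matrix of order $n$ and weight $k$ with columns $w_1,\dots,w_n$, let $C_i=w_iw_i^T$, and let $L_1,\dots,L_f$ be mutually suitable Latin squares of side $n$ with $L_m=(l_m(i,j))$. Let $\widetilde W_m=(C_{l_m(i,j)})_{i,j=1}^n$ for $m=1,\dots,f$. Define the $n^2\times n^2$ block matrix $W'$ whose $(i,j)$ block is $w_jw_i^T$. Then $W'$ is a weighing matrix of order $n^2$ and weight $k^2$, and $W',\widetilde W_1,\dots,\widetilde W_f$ form a set of $f+1$ mutually unbiased weighing matrices of order $n^2$ and weight $k^2$.
   Context: A weighing matrix of order $n$ and weight $k$ is an $n\times n$ matrix with entries in $\{1,-1,0\}$ such that $WW^T=kI_n$. Two weighing matrices $W_1,W_2$ of order $N$ and weight $K$ are unbiased if $\frac{1}{\sqrt{K}}W_1W_2^T$ is a weighing matrix of order $N$ and weight $K$; mutually unbiased means pairwise unbiased. Two Latin squares $L_1,L_2$ of side $n$ (symbols $\{1,\dots,n\}$) are suitable if for every row $a$ of $L_1$ and row $b$ of $L_2$ there is exactly one column $c$ with $L_1(a,c)=L_2(b,c)$; mutually suitable means pairwise suitable. *)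

From HB Require Import structures.
From mathcomp Require Import all_boot all_order all_algebra.
Set Implicit Arguments. Unset Strict Implicit. Unset Printing Implicit Defensive.
Import Order.TTheory GRing.Theory Num.Theory.
Local Open Scope ring_scope.

Definition is_weighing (R : nzRingType) (N K : nat) (W : 'M[R]_N) : Prop :=
  (forall i j, W i j = 1 \/ W i j = -1 \/ W i j = 0) /\
  W *m W^T = (K%:R)%:M.

Definition unbiased (R : rcfType) (N K : nat) (W1 W2 : 'M[R]_N) : Prop :=
  is_weighing K ((Num.sqrt (K%:R : R))^-1 *: (W1 *m W2^T)).

Definition mutually_unbiased_weighing (R : rcfType) (I : finType) (N K : nat)
    (F : I -> 'M[R]_N) : Prop :=
  (forall i, is_weighing K (F i)) /\
  (forall i j, i != j -> unbiased K (F i) (F j)).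

(* Latin square of side n, symbols 'I_n (i.e. {1..n} shifted to {0..n-1}). *)
Definition latin_square (n : nat) (L : 'I_n -> 'I_n -> 'I_n) : Prop :=
  (forall a, injective (L a)) /\ (forall c, injective (fun a => L a c)).

Definition suitable (n : nat) (L1 L2 : 'I_n -> 'I_n -> 'I_n) : Prop :=
  forall a b : 'I_n, #|[set c : 'I_n | L1 a c == L2 b c]| = 1%N.

Definition mutually_suitable (n f : nat) (L : 'I_f -> 'I_n -> 'I_n -> 'I_n) : Prop :=
  (forall m, latin_square (L m)) /\
  (forall m1 m2, m1 != m2 -> suitable (L m1) (L m2)).

(* Index p of 'I_(n*n) is read as p = blk p * n + off p, i.e. block index
   blk p and position off p inside the block (both 0-based). *)
Lemma blk_proof (n : nat) (p : 'I_(n * n)) : (p %/ n < n)%N.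
Proof. case: n p => [[]//|n] p; by rewrite ltn_divLR // ltn_ord. Qed.
Lemma off_proof (n : nat) (p : 'I_(n * n)) : (p %% n < n)%N.
Proof. case: n p => [[]//|n] p; by rewrite ltn_pmod. Qed.
Definition blk (n : nat) (p : 'I_(n * n)) : 'I_n := Ordinal (blk_proof p).
Definition off (n : nat) (p : 'I_(n * n)) : 'I_n := Ordinal (off_proof p).

Definition Wprime (R : nzRingType) (n : nat) (W : 'M[R]_n) : 'M[R]_(n * n) :=
  \matrix_(p, q) ((col (blk q) W *m (col (blk p) W)^T) (off p) (off q)).

Definition Cmat (R : nzRingType) (n : nat) (W : 'M[R]_n) (i : 'I_n) : 'M[R]_n :=
  col i W *m (col i W)^T.

Definition Wtilde (R : nzRingType) (n : nat) (W : 'M[R]_n)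
    (L : 'I_n -> 'I_n -> 'I_n) : 'M[R]_(n * n) :=
  \matrix_(p, q) Cmat W (L (blk p) (blk q)) (off p) (off q).

(* Both W' and each W~_m have (i, j) block w_x w_y^T for index maps x, y.
   In the product of two such matrices the sum over the position inside a
   block is a dot product of columns of W, which W^T W = k I collapses to
   k [y i j = v i' j]; what remains is a sum over j.  For W' W'^T and
   W~ W~^T it is a row dot product of W (for W~ via the Latin property), giving
   k^2 I; for the cross products the Latin and suitability conditions leave a
   single j, so every entry is k times an entry in {1, -1, 0}. *)

From HB Require Import structures.
From mathcomp Require Import all_boot all_order all_algebra.
From mathcomp Require Import ring.

Set Implicit Arguments.
Unset Strict Implicit.
Unset Printing Implicit Defensive.
Import Order.TTheory GRing.Theory Num.Theory.
Local Open Scope ring_scope.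

Section BlockIndex.
Variable n : nat.

Lemma idx_proof (i a : 'I_n) : (i * n + a < n * n)%N.
Proof.
rewrite (@leq_trans (i * n + n)) ?ltn_add2l // -mulSnr leq_mul2r.
by rewrite ltn_ord orbT.
Qed.

Definition idx (i a : 'I_n) : 'I_(n * n) := Ordinal (idx_proof i a).

Lemma blk_idx i a : blk (idx i a) = i.
Proof.
apply: val_inj => /=; have n_gt0 : (0 < n)%N := leq_ltn_trans (leq0n a) (ltn_ord a).
by rewrite divnMDl // divn_small ?addn0.
Qed.

Lemma off_idx i a : off (idx i a) = a.
Proof. by apply: val_inj => /=; rewrite modnMDl modn_small. Qed.

Lemma idx_blk_off p : idx (blk p) (off p) = p.
Proof. by apply: val_inj => /=; rewrite -divn_eq. Qed.

Lemma eq_idx i a j b : (idx i a == idx j b) = (i == j) && (a == b).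
Proof.
apply/eqP/andP; last by case=> /eqP-> /eqP->.
by move=> e; rewrite -(blk_idx i a) -[in a == b](off_idx i a) e blk_idx off_idx.
Qed.

Lemma sum_idx (V : nmodType) (F : 'I_(n * n) -> V) :
  \sum_p F p = \sum_i \sum_a F (idx i a).
Proof.
rewrite pair_big (reindex (fun ia : 'I_n * 'I_n => idx ia.1 ia.2)) /=.
  by apply: eq_bigr => -[i a].
exists (fun p => (blk p, off p)) => [[i a]|p] _ /=.
  by rewrite blk_idx off_idx.
by rewrite idx_blk_off.
Qed.

End BlockIndex.

Section NzRing.
Variable R : nzRingType.

Definition ternary (x : R) := x = 1 \/ x = -1 \/ x = 0.

Lemma ternary_mul x y : ternary x -> ternary y -> ternary (x * y).
Proof.
by move=> [->|[->|->]] [->|[->|->]];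
  rewrite /ternary ?mulr1 ?mul1r ?mulr0 ?mul0r ?mulrNN ?mulr1; auto.
Qed.

Lemma sumr_mulrn_pred1 (I : finType) (F : I -> R) (P : pred I) j0 :
  P =1 pred1 j0 -> \sum_j F j *+ P j = F j0.
Proof.
move=> PE; rewrite -(big_pred1 j0 (op := +%R) PE) big_mkcond.
by apply: eq_bigr => j _; rewrite mulrb.
Qed.

Lemma dot_rows_gram m (A : 'M[R]_m) c a a' :
  A *m A^T = c%:M -> \sum_j A a j * A a' j = c *+ (a == a').
Proof.
move=> AAT; have := congr1 (fun M : 'M[R]_m => M a a') AAT; rewrite !mxE => <-.
by apply: eq_bigr => j _; rewrite mxE.
Qed.

Lemma dot_cols_gram m (A : 'M[R]_m) c i i' :
  A^T *m A = c%:M -> \sum_b A b i * A b i' = c *+ (i == i').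
Proof.
move=> ATA; rewrite -(@dot_rows_gram _ A^T c i i') ?trmxK //.
by apply: eq_bigr => b _; rewrite !mxE.
Qed.

End NzRing.

Lemma trmx_gram_scalar (R : realFieldType) m (A : 'M[R]_m) c :
  A *m A^T = c%:M -> A^T *m A = c%:M.
Proof.
move=> AAT; have [c0|c_neq0] := eqVneq c 0.
  suff -> : A = 0 by rewrite c0 trmx0 mul0mx raddf0.
  apply/matrixP => a j; rewrite mxE.
  have /psumr_eq0P A_a0 : \sum_l A a l * A a l = 0.
    by rewrite (dot_rows_gram a a AAT) eqxx c0.
  have /eqP := A_a0 (fun l _ => ltac:(by rewrite -expr2 sqr_ge0)) j isT.
  by rewrite mulf_eq0 orbb => /eqP.
have A_rinv : A *m (c^-1 *: A^T) = 1%:M.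
  by rewrite -scalemxAr AAT scale_scalar_mx mulVf.
have := congr1 (fun M => c *: M) (mulmx1C A_rinv).
by rewrite /= -scalemxAl scalerA divff // scale1r scale_scalar_mx mulr1.
Qed.

Lemma is_weighing_tr (R : realFieldType) N K (M : 'M[R]_N) :
  is_weighing K M -> is_weighing K M^T.
Proof.
move=> [M_ternary MMT]; split; first by move=> i j; rewrite mxE.
by rewrite trmxK; apply: trmx_gram_scalar.
Qed.

Section Unbiased.
Variable R : rcfType.

Lemma unbiased_sym N K (A B : 'M[R]_N) : unbiased K A B -> unbiased K B A.
Proof.
rewrite /unbiased -[B *m A^T]trmxK trmx_mul trmxK.
by move/is_weighing_tr; rewrite linearZ.
Qed.

Lemma unbiased_of_gram N k (A B : 'M[R]_N) :
  A *m A^T = (k ^ 2)%:R%:M -> B *m B^T = (k ^ 2)%:R%:M ->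
  (forall p q, exists2 e, ternary e & (A *m B^T) p q = k%:R * e) ->
  unbiased (k ^ 2) A B.
Proof.
move=> AAT BBT ABT; rewrite /unbiased natrX sqrtr_sqr normr_nat; split.
  move=> p q; rewrite mxE; have [e e_ternary ->] := ABT p q.
  have [->|k_neq0] := eqVneq (k%:R : R) 0; first by rewrite invr0 mul0r; right; right.
  by rewrite mulKf.
rewrite linearZ /= -scalemxAl -scalemxAr scalerA trmx_mul trmxK mulmxA.
rewrite -(mulmxA A) (trmx_gram_scalar BBT) mul_mx_scalar -scalemxAl AAT.
rewrite !scale_scalar_mx natrX; congr (_%:M).
have [->|k_neq0] := eqVneq (k%:R : R) 0; first by rewrite expr0n /= !mulr0.
by field.
Qed.

End Unbiased.

Section OuterBlock.
Variables (R : comNzRingType) (n : nat) (W : 'M[R]_n).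

Definition outer_blockmx (x y : 'I_n -> 'I_n -> 'I_n) : 'M[R]_(n * n) :=
  \matrix_(p, q) (W (off p) (x (blk p) (blk q)) * W (off q) (y (blk p) (blk q))).

Lemma outer_blockmx_idx x y i a j b :
  outer_blockmx x y (idx i a) (idx j b) = W a (x i j) * W b (y i j).
Proof. by rewrite mxE !blk_idx !off_idx. Qed.

Lemma Wprime_outer : Wprime W = outer_blockmx (fun _ j => j) (fun i _ => i).
Proof. by apply/matrixP => p q; rewrite !mxE big_ord1 !mxE. Qed.

Lemma Wtilde_outer L : Wtilde W L = outer_blockmx L L.
Proof. by apply/matrixP => p q; rewrite !mxE big_ord1 !mxE. Qed.

Lemma gram_outer_blockmx c : W^T *m W = c%:M -> forall x y u v i a i' a',
  (outer_blockmx x y *m (outer_blockmx u v)^T) (idx i a) (idx i' a') =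
  \sum_j W a (x i j) * W a' (u i' j) * (c *+ (y i j == v i' j)).
Proof.
move=> WTW x y u v i a i' a'; rewrite mxE sum_idx; apply: eq_bigr => j _.
rewrite -(dot_cols_gram _ _ WTW) mulr_sumr; apply: eq_bigr => b _.
by rewrite [(_^T) _ _]mxE !outer_blockmx_idx; ring.
Qed.

End OuterBlock.

Lemma latin_rowP n (L : 'I_n -> 'I_n -> 'I_n) a c :
  latin_square L -> exists j0, forall j, (L a j == c) = (j == j0).
Proof.
move=> [row_inj _]; have /codomP [j0 ->] := inj_card_onto (row_inj a) (leqnn _) c.
by exists j0 => j; apply/eqP/eqP => [/row_inj|->].
Qed.

Lemma suitableP n (L1 L2 : 'I_n -> 'I_n -> 'I_n) a b :
  suitable L1 L2 -> exists j0, forall j, (L1 a j == L2 b j) = (j == j0).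
Proof.
move=> L12; have /eqP/cards1P [j0 agree] := L12 a b.
by exists j0 => j; rewrite -[j == j0]in_set1 -agree inE.
Qed.

Section Construction.
Variables (R : realFieldType) (n k : nat) (W : 'M[R]_n).
Hypothesis W_weighing : is_weighing k W.

Let W_ternary i j : ternary (W i j) := W_weighing.1 i j.
Let WWT : W *m W^T = k%:R%:M := W_weighing.2.
Let WTW : W^T *m W = k%:R%:M := trmx_gram_scalar WWT.

Lemma is_weighing_Wprime : is_weighing (k ^ 2) (Wprime W).
Proof.
split=> [p q|].
  by rewrite Wprime_outer mxE; apply: ternary_mul; apply: W_ternary.
apply/matrixP => p q; rewrite -(idx_blk_off p) -(idx_blk_off q).
move: (blk p) (off p) (blk q) (off q) => i a i' a'.
rewrite Wprime_outer (gram_outer_blockmx WTW) mxE eq_idx -mulr_suml.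
rewrite (dot_rows_gram _ _ WWT) natrX.
by case: (i == i'); case: (a == a'); rewrite ?mulr0n ?mulr1n ?mul0r ?mulr0.
Qed.

Lemma is_weighing_Wtilde L : latin_square L -> is_weighing (k ^ 2) (Wtilde W L).
Proof.
move=> [row_inj col_inj]; split=> [p q|].
  by rewrite Wtilde_outer mxE; apply: ternary_mul; apply: W_ternary.
apply/matrixP => p q; rewrite -(idx_blk_off p) -(idx_blk_off q).
move: (blk p) (off p) (blk q) (off q) => i a i' a'.
rewrite Wtilde_outer (gram_outer_blockmx WTW) mxE eq_idx.
have [<-|i_neq] := eqVneq i i'; last first.
  rewrite big1 // => j _; suff /negbTE-> : L i j != L i' j by rewrite mulr0.
  by apply: contra i_neq => /eqP/col_inj->.
under eq_bigr do rewrite eqxx mulr1n.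
rewrite -mulr_suml.
have -> : \sum_j W a (L i j) * W a' (L i j) = \sum_l W a l * W a' l.
  by rewrite [RHS](reindex_inj (row_inj i)).
rewrite (dot_rows_gram _ _ WWT) natrX.
by case: (a == a'); rewrite ?mulr0n ?mulr1n ?mul0r.
Qed.

Lemma Wprime_Wtilde_gram L p q : latin_square L ->
  exists2 e, ternary e & (Wprime W *m (Wtilde W L)^T) p q = k%:R * e.
Proof.
move=> L_latin; rewrite -(idx_blk_off p) -(idx_blk_off q).
move: (blk p) (off p) (blk q) (off q) => i a i' a'.
have [j0 hit] := latin_rowP i' i L_latin.
exists (W a j0 * W a' i); first by apply: ternary_mul; apply: W_ternary.
rewrite Wprime_outer Wtilde_outer (gram_outer_blockmx WTW).
under eq_bigr => j _ do rewrite mulrnAr eq_sym hit.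
have /eqP <- : L i' j0 == i by rewrite hit.
by rewrite (sumr_mulrn_pred1 _ (frefl _)) mulrC.
Qed.

Lemma Wtilde_suitable_gram L1 L2 p q : suitable L1 L2 ->
  exists2 e, ternary e & (Wtilde W L1 *m (Wtilde W L2)^T) p q = k%:R * e.
Proof.
move=> L12; rewrite -(idx_blk_off p) -(idx_blk_off q).
move: (blk p) (off p) (blk q) (off q) => i a i' a'.
have [j0 hit] := suitableP i i' L12.
exists (W a (L1 i j0) * W a' (L1 i j0)); first by apply: ternary_mul; apply: W_ternary.
rewrite !Wtilde_outer (gram_outer_blockmx WTW).
under eq_bigr => j _ do rewrite mulrnAr hit.
rewrite (sumr_mulrn_pred1 _ (frefl _)) mulrC.
by have /eqP -> : L2 i' j0 == L1 i j0 by rewrite eq_sym hit.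
Qed.

End Construction.

Theorem mainTheorem4 (R : rcfType) (n k f : nat) (W : 'M[R]_n)
    (L : 'I_f -> 'I_n -> 'I_n -> 'I_n) :
  is_weighing k W ->
  mutually_suitable L ->
  is_weighing (k ^ 2) (Wprime W) /\
  mutually_unbiased_weighing (k ^ 2)
    (fun m : option 'I_f =>
       match m with None => Wprime W | Some m' => Wtilde W (L m') end).
Proof.
move=> W_weighing [L_latin L_suitable].
have Wp_weighing := is_weighing_Wprime W_weighing.
have Wt_weighing m := is_weighing_Wtilde W_weighing (L_latin m).
have Wp_Wt_unbiased m : unbiased (k ^ 2) (Wprime W) (Wtilde W (L m)).
  apply: unbiased_of_gram Wp_weighing.2 (Wt_weighing m).2 _ => p q.
  exact: Wprime_Wtilde_gram.
split=> //; split=> [[m|] // | [m1|] [m2|] m12_neq].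
- have m12 : m1 != m2 by apply: contraNneq m12_neq => ->.
  apply: unbiased_of_gram (Wt_weighing m1).2 (Wt_weighing m2).2 _ => p q.
  exact/Wtilde_suitable_gram/L_suitable.
- exact/unbiased_sym/Wp_Wt_unbiased.
- exact: Wp_Wt_unbiased.
- by rewrite eqxx in m12_neq.
Qed.
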